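(* Let $d>0$, $\gamma>0$, $\beta>0$ and $\nu\ge 0$ be fixed with $\mathcal{R}_0=\beta/(\gamma+d)>1$. For each delay $\tau\ge 0$ let $(S^*,I^*(\tau))$ be the endemic equilibrium of the system described in the context, and let $$F(\omega,\tau)=\omega^2\left(\omega^4+a_1(\tau)\,\omega^2+a_0(\tau)\right),$$ with $a_1,a_0$ as defined in the context. Then the set of delays $\tau\ge 0$ for which $F(\omega,\tau)=0$ has a positive root $\omega>0$ is bounded, i.e. it is contained in a bounded interval $[0,\tau_{max})$ with $\tau_{max}<\infty$.
   Context: The model is the delay system for the fractions of susceptible $S$ and infected $I$ individuals (with immune fraction $R=1-S-I$): $$\dot S(t)=d(1-S(t))-\beta I(t)S(t)+I(t-\tau)\big(\gamma+\nu\beta(1-S(t-\tau)-I(t-\tau))\big)\exp\!\Big(-d\tau-\nu\beta\int_{t-\tau}^{t}I(u)\,du\Big),$$ $$\dot I(t)=\beta I(t)S(t)-(\gamma+d)I(t),$$ where $d>0$ is the per capita mortality (and birth) rate, $\beta$ the transmission rate, $\gamma$ the recovery rate, $\nu\ge0$ the boosting force and $\tau>0$ the maximal duration of immunity without boosting. When $\mathcal{R}_0=\beta/(\gamma+d)>1$ there is a unique endemic equilibrium $(S^*,I^* )$ with $S^*=1/\mathcal{R}_0$ and $I^*=I^*(\tau)>0$ the solution of $d(1-S^* )-\beta I^*S^*+(\gamma+\nu\beta(1-S^*-I^* ))I^*e^{-d\tau-\nu\beta\tau I^*}=0$. Define $\mu(\tau)=\beta I^*e^{-\tau(d+\nu\beta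 I^* )}$, $\sigma(\tau)=\gamma+\nu\beta(1-1/\mathcal{R}_0-I^* )$, and $$a_1(\tau)=d^2+\beta^2(I^* )^2-2\beta\gamma I^*-\nu^2\mu^2,$$ $$a_0(\tau)=(\beta I^*(\gamma+d))^2-2\nu\beta I^*(d+\beta I^* )\mu\sigma-(\sigma-\nu\beta I^* )^2\mu^2-2\nu^2\mu^2\beta I^*\sigma.$$ The function $F(\omega,\tau)$ equals $|P(i\omega,\tau)|^2-|Q(i\omega,\tau)|^2$ where $P(\lambda,\tau)=\lambda^3+\lambda^2(d+\beta I^* )+\lambda\beta(\gamma+d)I^*+\nu\beta I^*\mu\sigma$ and $Q(\lambda,\tau)=(\lambda^2\nu-\lambda(\sigma-\nu\beta I^* )-\nu\beta I^*\sigma)\mu$; the characteristic equation of the linearization at the endemic equilibrium is $P(\lambda,\tau)+Q(\lambda,\tau)e^{-\lambda\tau}=0$, and it has a purely imaginary root $i\omega$, $\omega>0$, only if $F(\omega,\tau)=0$. *)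

From Stdlib Require Import Reals Lra.
Open Scope R_scope.

(* Model parameters: d (mortality), beta (transmission), gamma (recovery),
   nu (boosting force).  Istar is the value Istar(tau). *)

Definition basicR0 (d beta gamma : R) : R := beta / (gamma + d).

Definition Sstar (d beta gamma : R) : R := / basicR0 d beta gamma.

Definition endemic_eq (d beta gamma nu tau I : R) : Prop :=
  let S := Sstar d beta gamma in
  d * (1 - S) - beta * I * S
  + (gamma + nu * beta * (1 - S - I)) * I * exp (- d * tau - nu * beta * tau * I) = 0.

Definition mu (d beta nu tau Is : R) : R :=
  beta * Is * exp (- tau * (d + nu * beta * Is)).

Definition sigma (d beta gamma nu Is : R) : R :=
  gamma + nu * beta * (1 - / basicR0 d beta gamma - Is).

Definition a1 (d beta gamma nu tau Is : R) : R :=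
  let m := mu d beta nu tau Is in
  d ^ 2 + beta ^ 2 * Is ^ 2 - 2 * beta * gamma * Is - nu ^ 2 * m ^ 2.

Definition a0 (d beta gamma nu tau Is : R) : R :=
  let m := mu d beta nu tau Is in
  let s := sigma d beta gamma nu Is in
  (beta * Is * (gamma + d)) ^ 2
  - 2 * nu * beta * Is * (d + beta * Is) * m * s
  - (s - nu * beta * Is) ^ 2 * m ^ 2
  - 2 * nu ^ 2 * m ^ 2 * beta * Is * s.

Definition Ffun (d beta gamma nu tau Is omega : R) : R :=
  omega ^ 2 * (omega ^ 4 + a1 d beta gamma nu tau Is * omega ^ 2
               + a0 d beta gamma nu tau Is).

From Pilot Require Import Defs.
From Stdlib Require Import Reals Lra Psatz.
From Coquelicot Require Import Coquelicot.
Open Scope R_scope.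

(* For w > 0, F(w, tau) = w^2 ((w^2 - c)^2 + k w^2 - eps) with c = beta Istar (gamma + d),
   k = (d + beta Istar)^2 - (nu mu)^2, and eps collecting the terms of a0 that carry a factor
   mu <= beta Istar e^{-d tau}.  Once e^{-d tau} is small, the equilibrium equation pins
   beta Istar between two positive constants, so c and k stay bounded away from 0 while
   eps = O(e^{-d tau}); hence the quartic factor is positive for all large tau. *)

Lemma exp_le_compat x y : x <= y -> exp x <= exp y.
Proof.
  intros [Hlt | ->]; [now left; apply exp_increasing | apply Rle_refl].
Qed.

Lemma eventually_decay_lt (d A B : R) (f : R -> R) :
  0 < d -> 0 < B ->
  (forall t, 0 <= t -> 0 <= f t <= exp (- (d * t))) ->
  Rbar_locally p_infty (fun t => f t * A < B).
Proof.
  intros Hd HB Hf.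
  exists (Rabs A / (d * B)); intros t Ht.
  assert (Hthreshold : 0 <= Rabs A / (d * B))
    by (apply Rle_mult_inv_pos; [apply Rabs_pos | nra]).
  assert (HAt : Rabs A < d * t * B).
  { apply (Rmult_lt_reg_r (/ (d * B))); [apply Rinv_0_lt_compat; nra|].
    replace (d * t * B * / (d * B)) with t by (field; lra). exact Ht. }
  assert (Hdecay : exp (- (d * t)) * (d * t) <= 1).
  { rewrite exp_Ropp.
    pose proof (exp_ineq1_le (d * t)); pose proof (exp_pos (d * t)).
    apply (Rmult_le_reg_l (exp (d * t))); [lra|].
    field_simplify; lra. }
  pose proof (Hf t ltac:(lra)); pose proof (exp_pos (- (d * t))).
  pose proof (Rle_abs A); pose proof (Rabs_pos A).
  nra.
Qed.

Lemma shifted_square_pos c c0 k k0 eps x :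
  0 < c0 -> c0 <= c -> 0 < k0 -> k0 <= k ->
  eps < c0 ^ 2 / 4 -> eps < k0 * c0 / 2 -> 0 < x ->
  0 < (x - c) ^ 2 + k * x - eps.
Proof.
  intros Hc0 Hc Hk0 Hk Heps1 Heps2 Hx.
  pose proof (pow2_ge_0 (x - c)).
  destruct (Rle_dec x (c / 2)) as [Hsmall | Hlarge].
  - assert (c0 ^ 2 / 4 <= (x - c) ^ 2) by nra. nra.
  - assert (k0 * c0 / 2 <= k * x) by nra. nra.
Qed.

Definition a0_mu_part (d nu y m s : R) : R :=
  2 * nu * y * (d + y) * m * s + (s - nu * y) ^ 2 * m ^ 2 + 2 * nu ^ 2 * m ^ 2 * y * s.

Lemma Ffun_shifted_square d beta gamma nu tau Is omega :
  let m := mu d beta nu tau Is in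
  let y := beta * Is in
  Ffun d beta gamma nu tau Is omega =
  omega ^ 2 * ((omega ^ 2 - y * (gamma + d)) ^ 2 + ((d + y) ^ 2 - (nu * m) ^ 2) * omega ^ 2
               - a0_mu_part d nu y m (Defs.sigma d beta gamma nu Is)).
Proof. unfold Ffun, a1, a0, a0_mu_part; simpl; ring. Qed.

Lemma a0_mu_part_le d nu Y Sg y s E :
  0 < d -> 0 <= nu -> 0 < y <= Y -> - Sg <= s <= Sg -> 0 <= E <= 1 ->
  a0_mu_part d nu y (y * E) s
  <= (2 * nu * Y ^ 2 * (d + Y) * Sg + (Sg + nu * Y) ^ 2 * Y ^ 2 + 2 * nu ^ 2 * Y ^ 3 * Sg) * E.
Proof.
  intros Hd Hnu [Hy HyY] [Hs1 Hs2] [HE0 HE1].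
  unfold a0_mu_part.
  assert (Hm : 0 <= y * E <= Y * E) by (split; nra).
  assert (Hm2 : (y * E) ^ 2 <= Y ^ 2 * E).
  { assert ((y * E) ^ 2 <= (Y * E) ^ 2) by (apply pow_incr; lra).
    assert (0 <= Y ^ 2 * E * (1 - E)) by (apply Rmult_le_pos; [apply Rmult_le_pos; nra | lra]).
    nra. }
  assert (T1 : 2 * nu * y * (d + y) * (y * E) * s <= 2 * nu * Y ^ 2 * (d + Y) * Sg * E).
  { assert (0 <= nu * y * (d + y) * (y * E)) by (repeat apply Rmult_le_pos; lra).
    assert (y * (d + y) <= Y * (d + Y)) by nra.
    assert (y * (d + y) * (y * E) <= Y * (d + Y) * (Y * E))
      by (apply Rmult_le_compat; nra).
    assert (nu * y * (d + y) * (y * E) <= nu * Y ^ 2 * (d + Y) * E) by nra.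
    nra. }
  assert (T2 : (s - nu * y) ^ 2 * (y * E) ^ 2 <= (Sg + nu * Y) ^ 2 * Y ^ 2 * E).
  { assert (0 <= nu * y <= nu * Y) by (split; nra).
    assert ((s - nu * y) ^ 2 <= (Sg + nu * Y) ^ 2).
    { assert (0 <= (Sg + nu * Y - (s - nu * y)) * (Sg + nu * Y + (s - nu * y)))
        by (apply Rmult_le_pos; lra).
      nra. }
    rewrite Rmult_assoc.
    apply Rmult_le_compat; [apply pow2_ge_0 | apply pow2_ge_0 | lra | lra]. }
  assert (T3 : 2 * nu ^ 2 * (y * E) ^ 2 * y * s <= 2 * nu ^ 2 * Y ^ 3 * Sg * E).
  { assert (Hnu2 : 0 <= nu ^ 2) by apply pow2_ge_0.
    assert (0 <= nu ^ 2 * (y * E) ^ 2 * y)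
      by (apply Rmult_le_pos; [apply Rmult_le_pos; [lra | apply pow2_ge_0] | lra]).
    assert ((y * E) ^ 2 * y <= Y ^ 2 * E * Y)
      by (apply Rmult_le_compat; [apply pow2_ge_0 | lra | lra | lra]).
    assert (nu ^ 2 * (y * E) ^ 2 * y <= nu ^ 2 * Y ^ 3 * E) by nra.
    nra. }
  lra.
Qed.

Lemma endemic_level_bounds a S beta g nu Is E :
  0 < a -> 0 < S -> 0 < beta -> 0 <= g -> 0 <= nu -> 0 < Is -> 0 <= E ->
  beta * Is * S = a + (g - nu * beta * Is) * Is * E ->
  E * g < beta * S / 2 -> E * (nu * (2 * a / S) ^ 2) < beta * a / 2 ->
  a / (2 * S) <= beta * Is <= 2 * a / S.
Proof.
  intros Ha HS Hb Hg Hnu HI HE Heq Hsmall1 Hsmall2.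
  assert (Hupper : beta * Is * S <= 2 * a).
  { assert (g * Is * E <= beta * S / 2 * Is) by nra.
    assert (0 <= nu * beta * Is * Is * E) by (repeat apply Rmult_le_pos; lra).
    nra. }
  assert (HyY : beta * Is <= 2 * a / S).
  { apply (Rmult_le_reg_r S); [lra|]. field_simplify; lra. }
  split; [|exact HyY].
  assert (Hboost : nu * beta * Is * Is * E <= a / 2).
  { apply (Rmult_le_reg_l beta); [lra|].
    assert ((beta * Is) ^ 2 <= (2 * a / S) ^ 2) by (apply pow_incr; nra).
    assert (nu * E * (beta * Is) ^ 2 <= nu * E * (2 * a / S) ^ 2) by
      (apply Rmult_le_compat_l; [nra|lra]).
    nra. }
  assert (0 <= g * Is * E) by (repeat apply Rmult_le_pos; lra).
  apply (Rmult_le_reg_r S); [lra|]. field_simplify; lra.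
Qed.

Section EndemicEquilibrium.

Variables d beta gamma nu : R.
Hypotheses (Hd : 0 < d) (Hgamma : 0 < gamma) (Hbeta : 0 < beta) (Hnu : 0 <= nu)
  (HR0 : 1 < basicR0 d beta gamma).

(* Once the delay factor is small, [beta * Istar] lies in [[a / (2 S), Y]]; [c0] and [K]
   are the resulting lower bound on [c] and constant in [eps = O(e^{-d tau})]. *)
Let S := Sstar d beta gamma.
Let a := d * (1 - S).
Let g := gamma + nu * beta * (1 - S).
Let Y := 2 * a / S.
Let Sg := g + nu * Y.
Let c0 := (gamma + d) * (a / (2 * S)).
Let K := 2 * nu * Y ^ 2 * (d + Y) * Sg + (Sg + nu * Y) ^ 2 * Y ^ 2 + 2 * nu ^ 2 * Y ^ 3 * Sg.

Lemma Sstar_bounds : 0 < S < 1.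
Proof.
  split.
  - apply Rinv_0_lt_compat; lra.
  - rewrite <- Rinv_1; apply Rinv_1_lt_contravar; lra.
Qed.

Lemma sigma_eq Is : Defs.sigma d beta gamma nu Is = g - nu * (beta * Is).
Proof. unfold Defs.sigma, g, S, Sstar; ring. Qed.

Lemma mu_eq tau Is :
  mu d beta nu tau Is = beta * Is * exp (- d * tau - nu * beta * tau * Is).
Proof. unfold mu; do 2 f_equal; ring. Qed.

Lemma endemic_eq_balance tau Is :
  endemic_eq d beta gamma nu tau Is ->
  beta * Is * S = a + (g - nu * beta * Is) * Is * exp (- d * tau - nu * beta * tau * Is).
Proof. unfold endemic_eq; cbv zeta; fold S; unfold a, g; intros H; lra. Qed.

Lemma Ffun_pos tau Is omega :
  0 <= tau -> 0 < Is -> endemic_eq d beta gamma nu tau Is ->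
  let E := exp (- d * tau - nu * beta * tau * Is) in
  E * g < beta * S / 2 -> E * (nu * Y ^ 2) < beta * a / 2 -> E * nu < 1 ->
  E * K < c0 ^ 2 / 4 -> E * K < d ^ 2 * c0 / 2 ->
  0 < omega -> 0 < Ffun d beta gamma nu tau Is omega.
Proof.
  intros Htau HIs Heq E Hsmall_g Hsmall_Y Hsmall_nu Hsmall_K1 Hsmall_K2 Homega.
  pose proof Sstar_bounds as [HS0 HS1].
  assert (Ha : 0 < a) by (unfold a; nra).
  assert (HE0 : 0 < E) by apply exp_pos.
  assert (HE1 : E <= 1).
  { rewrite <- exp_0; apply exp_le_compat.
    assert (0 <= nu * beta * tau * Is) by (repeat apply Rmult_le_pos; lra). nra. }
  assert (Hg : 0 <= g).
  { assert (0 <= nu * beta * (1 - S)) by (repeat apply Rmult_le_pos; lra).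
    unfold g; lra. }
  set (y := beta * Is).
  assert (Hy : a / (2 * S) <= y <= Y).
  { apply (endemic_level_bounds a S beta g nu Is E); try lra.
    - apply endemic_eq_balance; exact Heq.
    - exact Hsmall_Y. }
  assert (Hy0 : 0 < y) by (unfold y; nra).
  assert (Hs : - Sg <= g - nu * y <= Sg).
  { assert (0 <= nu * y <= nu * Y) by (split; nra).
    unfold Sg; split; lra. }
  assert (Hpart : a0_mu_part d nu y (y * E) (g - nu * y) <= K * E)
    by exact (a0_mu_part_le d nu Y Sg y (g - nu * y) E Hd Hnu ltac:(lra) Hs ltac:(lra)).
  rewrite Ffun_shifted_square; cbv zeta.
  rewrite mu_eq, sigma_eq; fold E y.
  apply Rmult_lt_0_compat; [apply pow_lt; lra|].
  apply (shifted_square_pos _ c0 _ (d ^ 2)); try lra.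
  - unfold c0; apply Rmult_lt_0_compat; [lra | apply Rdiv_lt_0_compat; lra].
  - unfold c0; rewrite Rmult_comm; apply Rmult_le_compat_r; lra.
  - apply pow_lt; lra.
  - assert (Hm : 0 <= nu * (y * E) <= y).
    { replace (nu * (y * E)) with (y * (E * nu)) by ring.
      split; [apply Rmult_le_pos; nra | nra]. }
    assert ((nu * (y * E)) ^ 2 <= y ^ 2) by (apply pow_incr; lra).
    nra.
  - apply pow_lt; lra.
Qed.

Lemma eventually_no_positive_root (Istar : R -> R) :
  (forall tau, 0 <= tau -> 0 < Istar tau /\ endemic_eq d beta gamma nu tau (Istar tau)) ->
  Rbar_locally p_infty
    (fun tau => forall omega, 0 < omega -> 0 < Ffun d beta gamma nu tau (Istar tau) omega).
Proof.
  intros HI.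
  pose proof Sstar_bounds as [HS0 HS1].
  assert (Ha : 0 < a) by (unfold a; nra).
  assert (Hc0 : 0 < c0)
    by (unfold c0; apply Rmult_lt_0_compat; [lra | apply Rdiv_lt_0_compat; lra]).
  set (E := fun tau => exp (- d * tau - nu * beta * tau * Istar tau)).
  assert (HE : forall tau, 0 <= tau -> 0 <= E tau <= exp (- (d * tau))).
  { intros tau Htau; split; [left; apply exp_pos | apply exp_le_compat].
    assert (0 <= nu * beta * tau * Istar tau)
      by (pose proof (proj1 (HI tau Htau)); repeat apply Rmult_le_pos; lra).
    lra. }
  assert (Hnonneg : Rbar_locally p_infty (fun tau => 0 <= tau))
    by (exists 0; intros; lra).
  pose proof (fun A B HB => eventually_decay_lt d A B E Hd HB HE) as Hdecay.
  assert (HB_g : 0 < beta * S / 2) by (pose proof (Rmult_lt_0_compat beta S); lra).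
  assert (HB_Y : 0 < beta * a / 2) by (pose proof (Rmult_lt_0_compat beta a); lra).
  assert (HB_K1 : 0 < c0 ^ 2 / 4) by (pose proof (pow_lt c0 2 Hc0); lra).
  assert (HB_K2 : 0 < d ^ 2 * c0 / 2)
    by (pose proof (Rmult_lt_0_compat (d ^ 2) c0 (pow_lt d 2 Hd) Hc0); lra).
  generalize (filter_and _ _ Hnonneg
    (filter_and _ _ (Hdecay g _ HB_g)
    (filter_and _ _ (Hdecay (nu * Y ^ 2) _ HB_Y)
    (filter_and _ _ (Hdecay nu 1 Rlt_0_1)
    (filter_and _ _ (Hdecay K _ HB_K1) (Hdecay K _ HB_K2)))))).
  apply filter_imp.
  intros tau (Htau & Hsmall_g & Hsmall_Y & Hsmall_nu & Hsmall_K1 & Hsmall_K2) omega Homega.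
  destruct (HI tau Htau) as [HIs Heq].
  now apply Ffun_pos.
Qed.

End EndemicEquilibrium.

Theorem proposition1 (d beta gamma nu : R) (Istar : R -> R)
  (Hd : 0 < d) (Hgamma : 0 < gamma) (Hbeta : 0 < beta) (Hnu : 0 <= nu)
  (HR0 : 1 < basicR0 d beta gamma)
  (HI : forall tau, 0 <= tau ->
          0 < Istar tau /\ endemic_eq d beta gamma nu tau (Istar tau)) :
  exists tau_max : R,
    forall tau, 0 <= tau ->
      (exists omega, 0 < omega /\ Ffun d beta gamma nu tau (Istar tau) omega = 0) ->
      tau < tau_max.
Proof.
  destruct (eventually_no_positive_root d beta gamma nu Hd Hgamma Hbeta Hnu HR0 Istar HI)
    as [M HM].
  exists (M + 1).
  intros tau _ [omega [Homega HF]].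
  destruct (Rlt_or_le tau (M + 1)) as [Hlt | Hge]; [exact Hlt|].
  specialize (HM tau ltac:(lra) omega Homega).
  lra.
Qed.
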